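(* Let $a>0$, $\beta>0$, let $\lambda$ be feasible, let $0<\xi<a/2$, let $\rho\in\mathcal{P}$, and suppose $d_0\ge\tau(\beta)a$. Then $\lim_{\delta\to0^+}T_2=0$, where \[ T_2=C_5\,\delta\,(\lambda^2\delta^{2\beta}+4)\int_0^{k_0(\delta)}\mathrm{e}^{-2k(d_0-3a)}\mathrm{e}^{-4ka}\left(\frac{\mathrm{e}^{2k\xi}-1}{k}\right)\mathrm{d}k,\qquad C_5=\frac{(d_1-d_0)\|\rho\|^2_{L^2(\mathcal{M})}}{9\pi}. \]
   Context: For $0<\delta<1$ and constants $\beta>0$, $\lambda\in\mathbb{R}$, put $\mu=\delta+\lambda\delta^{\beta}$. The constant $\lambda$ is feasible if $\lambda>0$ when $0<\beta<1$, $\lambda\ge-1$ when $\beta=1$, $\lambda\ne0$ when $\beta>1$; $\delta_\mu\in(0,1)$ is a number with $\mu\ge0$ for $0<\delta\le\delta_\mu$. $k_0(\delta)=\frac{1}{2a}\ln\left(\frac{1}{2\delta^2+\lambda\delta^{\beta+1}}\right)$, and $\delta$ ranges over $0<\delta\le\delta_0$, where $0<\delta_0\le\delta_\mu$ is such that $k_0(\delta)>0$ for $0<\delta\le\delta_0$. $\tau(\beta)=\frac{\beta+2}{\beta+1}$ for $0<\beta<1$ and $\tau(\beta)=\frac32$ for $\beta\ge1$. Let $\mathcal{M}=\{(x,y):x>a\}$; $\mathcal{P}$ is the set of real-valued $\rho\in L^2(\mathcal{M})\cap L^\infty(\mathcal{M})$ with compact support in $\mathcal{M}$, $0<|\operatorname{supp}\rho|<\infty$,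 and $\int\!\!\int\rho=0$; $d_0=\min\{x:(x,y)\in\operatorname{supp}\rho\}$, $d_1=\max\{x:(x,y)\in\operatorname{supp}\rho\}$. *)

From HB Require Import structures.
From mathcomp Require Import all_boot all_order all_algebra.
From mathcomp Require Import all_classical all_reals all_analysis.
Set Implicit Arguments. Unset Strict Implicit. Unset Printing Implicit Defensive.
Import Order.TTheory GRing.Theory Num.Theory.
Import numFieldNormedType.Exports.
Local Open Scope classical_set_scope.
Local Open Scope ring_scope.

Definition leb2 (R : realType) :=
  ((@lebesgue_measure R) \x (@lebesgue_measure R))%E.

Definition feasible (R : realType) (beta lam : R) : Prop :=
  (beta < 1 -> 0 < lam) /\ (beta = 1 -> -1 <= lam) /\ (1 < beta -> lam != 0).

Definition tau (R : realType) (beta : R) : R :=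
  if beta < 1 then (beta + 2) / (beta + 1) else 3 / 2.

Definition k0 (R : realType) (a beta lam delta : R) : R :=
  (2 * a)^-1 * ln ((2 * delta ^+ 2 + lam * delta `^ (beta + 1))^-1).

Definition regionM (R : realType) (a : R) : set (R * R) := [set p | a < p.1].

Definition supp (R : realType) (rho : R * R -> R) : set (R * R) :=
  closure [set p | rho p != 0].

Definition inP (R : realType) (a : R) (rho : R * R -> R) : Prop :=
  [/\ measurable_fun setT rho /\
        ((@leb2 R)).-integrable setT (fun p => ((rho p) ^+ 2)%:E),
      (exists Mb : R, {ae (@leb2 R), forall p, `|rho p| <= Mb}),
      compact (supp rho) /\ supp rho `<=` regionM a,
      (0 < (@leb2 R) (supp rho))%E /\ ((@leb2 R) (supp rho) < +oo)%E &
      (\int[(@leb2 R)]_(p in setT) (rho p)%:E = 0)%E].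

Definition d0 (R : realType) (rho : R * R -> R) : R := inf (fst @` supp rho).
Definition d1 (R : realType) (rho : R * R -> R) : R := sup (fst @` supp rho).

Definition L2norm2 (R : realType) (a : R) (rho : R * R -> R) : R :=
  \int[(@leb2 R)]_(p in regionM a) (rho p ^+ 2).

Definition C5 (R : realType) (a : R) (rho : R * R -> R) : R :=
  (d1 rho - d0 rho) * L2norm2 a rho / (9 * pi).

Definition T2 (R : realType) (a beta lam xi : R) (rho : R * R -> R) (delta : R) : R :=
  C5 a rho * delta * (lam ^+ 2 * delta `^ (2 * beta) + 4) *
  \int[@lebesgue_measure R]_(k in `[0, k0 a beta lam delta]%classic)
     (expR (- (2 * k * (d0 rho - 3 * a))) * expR (- (4 * k * a)) *
      ((expR (2 * k * xi) - 1) / k)).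

From HB Require Import structures.
From mathcomp Require Import all_boot all_order all_algebra.
From mathcomp Require Import all_classical all_reals all_analysis.
From mathcomp Require Import ring lra measurable_realfun exponential_distribution.
Import Order.TTheory GRing.Theory Num.Theory.
Import numFieldNormedType.Exports.
Local Open Scope classical_set_scope.
Local Open Scope ring_scope.

(* For k >= 0 one has (e^(2 k xi) - 1) / k <= 2 xi e^(2 k xi), so the integrand
   of T2 is at most 2 xi e^(-c k) with c = 2 (d0 - a - xi), and c > 0 because
   d0 >= tau(beta) a >= 3a/2 > a + xi.  Hence the integral over [0, k0(delta)]
   is bounded by 2 xi / c uniformly in delta; the factor lam^2 delta^(2 beta) + 4
   stays bounded as delta -> 0+, so T2 = O(delta). *)

(* The integral of a nonnegative function is a supremum over simple functions
   below it, so it is monotone without any measurability assumption. *)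
Lemma ge0_le_integral_nonmeasurable d (T : measurableType d) (R : realType)
    (mu : {measure set T -> \bar R}) (D : set T) (f g : T -> \bar R) :
  (forall x, D x -> (0 <= f x)%E) -> (forall x, D x -> (f x <= g x)%E) ->
  (\int[mu]_(x in D) f x <= \int[mu]_(x in D) g x)%E.
Proof.
move=> f0 fg.
rewrite ge0_integralE // [X in (_ <= X)%E]ge0_integralE; last first.
  by move=> x Dx; apply: le_trans (f0 x Dx) (fg x Dx).
apply: ereal_sup_le => _ [h hf <-]; exists h => // x.
apply: le_trans (hf x) _; rewrite !patchE; case: ifP => // /set_mem Dx.
exact: fg.
Qed.

Section exponential_bounds.
Context {R : realType}.

Lemma expR_sub1_le (t : R) : expR t - 1 <= t * expR t.
Proof.
have le1 := expR_ge1Dx (- t).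
have := expRxMexpNx_1 t; have := expR_gt0 t; nra.
Qed.

Lemma Rintegral_itv0_exponential_pdf_bound {c M : R} (x : R) {f : R -> R} :
  0 < c -> 0 <= M ->
  (forall k, 0 <= k -> 0 <= f k <= M * exponential_pdf c k) ->
  0 <= \int[@lebesgue_measure R]_(k in `[0, x]%classic) f k <= M.
Proof.
move=> c0 M0 hf.
have itv_ge0 k : `[0, x]%classic k -> 0 <= k by rewrite /= in_itv /= => /andP[].
have Mpdf_ge0 k : (0 <= (M * exponential_pdf c k)%:E)%E.
  by rewrite lee_fin mulr_ge0 // exponential_pdf_ge0 // ltW.
have mpdf : measurable_fun setT (exponential_pdf c).
  exact: measurable_exponential_pdf.
set e := (\int[@lebesgue_measure R]_(k in `[0%R, x]%classic) (f k)%:E)%E.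
have e_ge0 : (0 <= e)%E.
  by apply: integral_ge0 => k /itv_ge0 /hf /andP[f0 _]; rewrite lee_fin.
have e_le : (e <= M%:E)%E.
  apply: (@le_trans _ _ (\int[@lebesgue_measure R]_(k in `[0%R, x]%classic)
             (M * exponential_pdf c k)%:E)%E).
    by apply: ge0_le_integral_nonmeasurable => k /itv_ge0 /hf /andP[f0 fM];
      rewrite lee_fin.
  apply: (@le_trans _ _ (\int[@lebesgue_measure R]_(k in setT)
             (M * exponential_pdf c k)%:E)%E).
    apply: ge0_subset_integral => //.
    by apply/measurable_EFinP; apply: measurable_funM.
  under eq_integral do rewrite EFinM.
  rewrite ge0_integralZl_EFin //; last exact/measurable_EFinP.
    by rewrite integral_exponential_pdf // mule1.
  by move=> k _; rewrite lee_fin exponential_pdf_ge0 // ltW.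
rewrite /Rintegral -/e.
by move: e e_ge0 e_le => [r| |] //=; rewrite !lee_fin => -> ->.
Qed.

Definition T2_integrand (a d xi k : R) : R :=
  expR (- (2 * k * (d - 3 * a))) * expR (- (4 * k * a)) *
  ((expR (2 * k * xi) - 1) / k).

Lemma T2_integrand_bound {a d xi : R} (k : R) :
  0 < xi -> 0 < 2 * (d - a - xi) -> 0 <= k ->
  0 <= T2_integrand a d xi k
    <= (2 * xi / (2 * (d - a - xi))) * exponential_pdf (2 * (d - a - xi)) k.
Proof.
set c := 2 * (d - a - xi) => xi0 c0 k0.
rewrite /T2_integrand exponential_pdfE //.
set E := expR (- (2 * k * (d - 3 * a))) * expR (- (4 * k * a)).
have E0 : 0 < E by rewrite mulr_gt0 // expR_gt0.
have E_eq : E * expR (2 * k * xi) = expR (- c * k).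
  by rewrite /E -!expRD; congr expR; rewrite /c; ring.
have [->|k_neq0] := eqVneq k 0.
  rewrite invr0 !mulr0 lexx /=.
  by rewrite mulr_ge0 ?expR_ge0 // ?divr_ge0 ?ltW // mulr_gt0.
have kpos : 0 < k by rewrite lt_def k_neq0.
have quot_ge0 : 0 <= (expR (2 * k * xi) - 1) / k.
  apply: divr_ge0; last exact: ltW.
  by rewrite subr_ge0 leNgt expR_lt1 -leNgt !mulr_ge0 // ltW.
have quot_le : (expR (2 * k * xi) - 1) / k <= 2 * xi * expR (2 * k * xi).
  rewrite ler_pdivrMr //.
  have -> : 2 * xi * expR (2 * k * xi) * k = 2 * k * xi * expR (2 * k * xi) by ring.
  exact: expR_sub1_le.
apply/andP; split; first exact: mulr_ge0 (ltW E0) quot_ge0.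
apply: le_trans (ler_wpM2l (ltW E0) quot_le) _.
by rewrite mulrCA E_eq mulrA divfK // gt_eqF.
Qed.

End exponential_bounds.

Lemma tau_ge_three_halves (R : realType) (beta : R) : 0 < beta -> 3 / 2 <= tau beta.
Proof.
move=> beta0; rewrite /tau; case: ifP => // beta1.
rewrite ler_pdivlMr; last lra.
by rewrite mulrAC ler_pdivrMr; lra.
Qed.

Lemma cvg_at_right0_linear_bound (R : realType) (f : R -> R) (K : R) :
  (\forall d \near 0^'+, `|f d| <= K * d) -> f @ 0^'+ --> 0.
Proof.
move=> fK.
have Kd0 : (fun d => K * d) @ 0^'+ --> (0 : R).
  apply: cvg_at_right_filter; rewrite -[X in _ --> X](mulr0 K).
  exact: cvgMl_tmp cvg_id.
apply: (@squeeze_cvgr _ _ _ _ (fun d => - (K * d)) _ f _ 0 _ Kd0).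
  by apply: filterS fK => d; rewrite ler_norml.
by rewrite -[X in _ --> X]oppr0; exact: cvgN.
Qed.

Theorem lemma5p3 (R : realType) (a beta lam xi : R) (rho : R * R -> R) :
  0 < a -> 0 < beta -> feasible beta lam -> 0 < xi -> xi < a / 2 ->
  inP a rho -> tau beta * a <= d0 rho ->
  T2 a beta lam xi rho delta @[delta --> 0^'+] --> 0.
Proof.
move=> a0 beta0 _ xi0 xia _ tau_d0.
have c0 : 0 < 2 * (d0 rho - a - xi).
  have : 3 / 2 * a <= d0 rho by apply: le_trans tau_d0; rewrite ler_wpM2r ?tau_ge_three_halves ?ltW.
  lra.
set M := 2 * xi / (2 * (d0 rho - a - xi)).
have M0 : 0 <= M by rewrite divr_ge0 ?ltW // mulr_gt0.
apply: (@cvg_at_right0_linear_bound _ _ (`|C5 a rho| * ((lam ^+ 2 + 4) * M))).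
near=> delta.
have delta0 : 0 < delta by near: delta; exact: nbhs_right_gt.
have delta1 : delta < 1 by near: delta; exact: nbhs_right_lt.
rewrite /T2; set I := (X in _ * X).
have /andP[I0 IM] : 0 <= I <= M := Rintegral_itv0_exponential_pdf_bound
  (k0 a beta lam delta) c0 M0 (fun k => T2_integrand_bound k xi0 c0).
have pow_le1 : delta `^ (2 * beta) <= 1.
  rewrite -[leRHS](powRr0 delta); apply: ger_powR; first by rewrite delta0 (ltW delta1).
  by rewrite mulr_ge0 // ltW.
have P0 : 0 <= lam ^+ 2 * delta `^ (2 * beta) + 4.
  by rewrite addr_ge0 // mulr_ge0 ?sqr_ge0 ?powR_ge0.
have PL : lam ^+ 2 * delta `^ (2 * beta) + 4 <= lam ^+ 2 + 4.
  by rewrite lerD2r ler_piMr ?sqr_ge0.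
rewrite normrM (ger0_norm I0) normrM (ger0_norm P0) normrM (gtr0_norm delta0).
rewrite -mulrA [leRHS]mulrAC.
apply: ler_wpM2l; first exact: mulr_ge0 (normr_ge0 _) (ltW delta0).
exact: ler_pM P0 I0 PL IM.
Unshelve. all: end_near.
Qed.
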